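(* Let $\Lambda=(\alpha_1,\alpha_2,\beta_2,\beta_3,\beta_4)$ be five distinct real numbers with $\alpha_2+\beta_2\neq\beta_3+\beta_4$. Extend to sequences by $\alpha_i:=\alpha_1$ for odd $i$, $\alpha_i:=\alpha_2$ for even $i$, and $\beta_i:=\beta_j$ whenever $j\in\{2,3,4\}$ and $i\equiv j\pmod 3$. Let $n\ge1$, let $a_1,\dots,a_n\in\mathbb R$ and $b_2,\dots,b_n>0$, and let $C_1,\dots,C_n$ be defined by $C_1=(a_1)$ and $C_{k+1}=\begin{pmatrix}a_{k+1}& b_{k+1}{\bf e}_1^\top\\ {\bf e}_1 & C_k\end{pmatrix}$. The following are equivalent: (i) $\sigma(C_1)=\{\alpha_1\}$ and $\sigma(C_i)\cap\{\alpha_1,\alpha_2,\beta_2,\beta_3,\beta_4\}=\{\alpha_i,\beta_i\}$ for $i=2,\dots,n$; (ii) for $1\le i\le n$, $a_i=\alpha_1$ if $i$ is odd, $a_2=-\alpha_1+\alpha_2+\beta_2$, and $a_i=\alpha_2$ if $i>2$ is even; and for $2\le i\le n$, $b_2=(\beta_2-\alpha_1)(\alpha_1-\alpha_2)$, $b_3=(\beta_3-\alpha_2)(\beta_3-\beta_2)$, $b_4=\dfrac{(\beta_4-\alpha_1)(\beta_3-\beta_4)(\alpha_2+\beta_2-\beta_3-\beta_4)}{\beta_4-\beta_2}$, and $b_i=(\beta_j-\alpha_1)(\beta_j-\alpha_2)$ when $i>4$, $j\in\{2,3,4\}$, $i\equiv j\pmod 3$. Moreover, when these conditions hold: if $n\ge4$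 then $\Lambda\in\mathcal B$; if $n=3$ then $(\alpha_1,\alpha_2,\beta_2,\beta_3)\in\mathcal B_3$; if $n=2$ then $(\alpha_1,\alpha_2,\beta_2)\in\mathcal B_2$.
   Context: ${\bf e}_1$ denotes the first standard basis vector of the appropriate length. $\mathcal B$ is the set of all $(\alpha_1,\alpha_2,\beta_2,\beta_3,\beta_4)\in\mathbb R^5$ with five distinct entries satisfying one of the following twelve conditions: $\beta_2<\alpha_1<\alpha_2<\beta_3<\beta_4$; $\beta_2<\beta_4<\alpha_1<\alpha_2<\beta_3$; $\beta_4<\beta_2<\alpha_1<\alpha_2<\beta_3$ and $\alpha_2+\beta_2>\beta_4+\beta_3$; $\beta_3<\beta_2<\alpha_1<\alpha_2<\beta_4$ and $\alpha_2+\beta_2<\beta_4+\beta_3$; $\beta_3<\beta_2<\beta_4<\alpha_1<\alpha_2$; $\beta_4<\beta_3<\beta_2<\alpha_1<\alpha_2$; $\beta_4<\beta_3<\alpha_2<\alpha_1<\beta_2$; $\beta_3<\alpha_2<\alpha_1<\beta_4<\beta_2$; $\beta_3<\alpha_2<\alpha_1<\beta_2<\beta_4$ and $\alpha_2+\beta_2<\beta_4+\beta_3$; $\beta_4<\alpha_2<\alpha_1<\beta_2<\beta_3$ and $\alpha_2+\beta_2>\beta_4+\beta_3$; $\alpha_2<\alpha_1<\beta_4<\beta_2<\beta_3$; $\alpha_2<\alpha_1<\beta_2<\beta_3<\beta_4$. $\mathcal B_3$ is the set of $(\alpha_1,\alpha_2,\beta_2,\beta_3)$ such that $(\alpha_1,\alpha_2,\beta_2,\beta_3,\beta_4)\in\mathcal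 B$ for some $\beta_4$; $\mathcal B_2$ is the set of $(\alpha_1,\alpha_2,\beta_2)$ such that $(\alpha_1,\alpha_2,\beta_2,\beta_3,\beta_4)\in\mathcal B$ for some $\beta_3,\beta_4$. *)

From HB Require Import structures.
From mathcomp Require Import all_boot all_order all_algebra.
From mathcomp Require Import reals.
Set Implicit Arguments. Unset Strict Implicit. Unset Printing Implicit Defensive.
Import Order.TTheory GRing.Theory Num.Theory.
Local Open Scope ring_scope.

Section Defs.
Variable R : realType.

Definition e1c (k : nat) : 'cV[R]_k.+1 := \col_(i < k.+1) (i == ord0)%:R.
Definition e1r (k : nat) : 'rV[R]_k.+1 := \row_(j < k.+1) (j == ord0)%:R.

(* Cmat a b k is the (k+1)x(k+1) matrix C_{k+1} of the paper
   (a, b : nat -> R are 1-based sequences a_1, a_2, ... and b_2, b_3, ...):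
   C_1 = (a_1),  C_{k+1} = [[a_{k+1}, b_{k+1} e_1^T], [e_1, C_k]]. *)
Fixpoint Cmat (a b : nat -> R) (k : nat) : 'M[R]_k.+1 :=
  match k return 'M[R]_k.+1 with
  | 0 => (a 1%N)%:M
  | k'.+1 => block_mx ((a k.+1)%:M : 'M[R]_1) (b k.+1 *: e1r k')
                      (e1c k') (Cmat a b k')
  end.

Definition alphaSeq (al1 al2 : R) (i : nat) : R := if odd i then al1 else al2.
Definition betaSeq (be2 be3 be4 : R) (i : nat) : R :=
  match (i %% 3)%N with 2 => be2 | 0 => be3 | _ => be4 end.

Definition distinct5 (x1 x2 x3 x4 x5 : R) : Prop :=
  uniq [:: x1; x2; x3; x4; x5].

Definition inB (a1 a2 b2 b3 b4 : R) : Prop :=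
  distinct5 a1 a2 b2 b3 b4 /\
  ( ((b2 < a1) /\ (a1 < a2) /\ (a2 < b3) /\ (b3 < b4))
 \/ ((b2 < b4) /\ (b4 < a1) /\ (a1 < a2) /\ (a2 < b3))
 \/ ((b4 < b2) /\ (b2 < a1) /\ (a1 < a2) /\ (a2 < b3) /\ (a2 + b2 > b4 + b3))
 \/ ((b3 < b2) /\ (b2 < a1) /\ (a1 < a2) /\ (a2 < b4) /\ (a2 + b2 < b4 + b3))
 \/ ((b3 < b2) /\ (b2 < b4) /\ (b4 < a1) /\ (a1 < a2))
 \/ ((b4 < b3) /\ (b3 < b2) /\ (b2 < a1) /\ (a1 < a2))
 \/ ((b4 < b3) /\ (b3 < a2) /\ (a2 < a1) /\ (a1 < b2))
 \/ ((b3 < a2) /\ (a2 < a1) /\ (a1 < b4) /\ (b4 < b2))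
 \/ ((b3 < a2) /\ (a2 < a1) /\ (a1 < b2) /\ (b2 < b4) /\ (a2 + b2 < b4 + b3))
 \/ ((b4 < a2) /\ (a2 < a1) /\ (a1 < b2) /\ (b2 < b3) /\ (a2 + b2 > b4 + b3))
 \/ ((a2 < a1) /\ (a1 < b4) /\ (b4 < b2) /\ (b2 < b3))
 \/ ((a2 < a1) /\ (a1 < b2) /\ (b2 < b3) /\ (b3 < b4)) ).

Definition inB3 (a1 a2 b2 b3 : R) : Prop := exists b4, inB a1 a2 b2 b3 b4.
Definition inB2 (a1 a2 b2 : R) : Prop := exists b3 b4, inB a1 a2 b2 b3 b4.

End Defs.

(* The polynomials chi_k := det (x - C_k) obey the three-term recurrence
   chi_{k+1} = (x - a_{k+1}) chi_k - b_{k+1} chi_{k-1}.  As alpha is 2-periodic and beta is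
   3-periodic, Lambda = {alpha_i, beta_i, alpha_{i+1}, beta_{i+1}, beta_{i+2}} for every i,
   so (i) says that chi_i vanishes on Lambda exactly at alpha_i and beta_i.  Given this root
   pattern for chi_{i-1} and chi_i, the recurrence evaluated at alpha_{i+1} = alpha_{i-1}
   and at beta_{i+1} makes the two vanishing conditions on chi_{i+1} determine a_{i+1} and
   then b_{i+1}, which yields (ii); conversely the values in (ii) propagate the pattern.
   Finally, each sign pattern making b_2, b_3 and b_4 positive is one of the orderings
   defining B. *)

From HB Require Import structures.
From mathcomp Require Import all_boot all_order all_algebra.
From mathcomp Require Import reals.
From mathcomp Require Import ring lra zify.
Set Implicit Arguments. Unset Strict Implicit. Unset Printing Implicit Defensive.
Import Order.TTheory GRing.Theory Num.Theory.
Local Open Scope ring_scope.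

Section BlockEntries.
Variables (T : Type) (m n : nat).
Variables (A : 'M[T]_1) (B : 'M[T]_(1, n)) (C : 'M[T]_(m, 1)) (D : 'M[T]_(m, n)).

Lemma block1_mxE00 : (block_mx A B C D : 'M_(1 + m, 1 + n)) ord0 ord0 = A 0 0.
Proof.
by rewrite -(block_mxEul A B C D ord0 ord0); congr (block_mx _ _ _ _ _ _); apply: val_inj.
Qed.

Lemma block1_mxE0r j : (block_mx A B C D : 'M_(1 + m, 1 + n)) ord0 (lift ord0 j) = B 0 j.
Proof.
by rewrite -(block_mxEur A B C D ord0 j); congr (block_mx _ _ _ _ _ _); apply: val_inj.
Qed.

Lemma block1_mxEr0 i : (block_mx A B C D : 'M_(1 + m, 1 + n)) (lift ord0 i) ord0 = C i 0.
Proof.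
by rewrite -(block_mxEdl A B C D i ord0); congr (block_mx _ _ _ _ _ _); apply: val_inj.
Qed.

Lemma block1_mxErr i j :
  (block_mx A B C D : 'M_(1 + m, 1 + n)) (lift ord0 i) (lift ord0 j) = D i j.
Proof.
by rewrite -(block_mxEdr A B C D i j); congr (block_mx _ _ _ _ _ _); apply: val_inj.
Qed.

Lemma minor00_block1_mx :
  row' ord0 (col' ord0 (block_mx A B C D : 'M_(1 + m, 1 + n))) = D.
Proof. by apply/matrixP=> i j; rewrite -block1_mxErr !mxE. Qed.

End BlockEntries.

Section BorderedDeterminant.
Variable R : realType.

Lemma det_block1_e1 k (c u v : R) (D : 'M[R]_k.+1) :
  \det (block_mx (c%:M : 'M_1) (u *: e1r R k) (v *: e1c R k) D) =
  c * \det D - u * v * \det (row' ord0 (col' ord0 D)).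
Proof.
set M := block_mx _ _ _ _.
have M00 : M ord0 ord0 = c by rewrite block1_mxE00 mxE.
have M0r j : M ord0 (lift ord0 j) = u * (j == ord0)%:R by rewrite block1_mxE0r !mxE.
have Mr0 i : M (lift ord0 i) ord0 = v * (i == ord0)%:R by rewrite block1_mxEr0 !mxE.
have Mrr i j : M (lift ord0 i) (lift ord0 j) = D i j by rewrite block1_mxErr.
clearbody M.
have lift10 : lift (lift ord0 ord0) ord0 = ord0 :> 'I_k.+2 by apply: val_inj.
rewrite (expand_det_row M ord0) !big_ord_recl big1 => [|j _]; last first.
  by rewrite M0r mulr0 mul0r.
rewrite M00 M0r eqxx mulr1 addr0 /cofactor !expr0 expr1 !mul1r.
set N := row' ord0 (col' (lift ord0 ord0) M).
rewrite (expand_det_col N ord0) big_ord_recl big1 => [|i _]; last first.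
  by rewrite !mxE lift10 Mr0 mulr0 mul0r.
rewrite /cofactor !mxE lift10 Mr0 eqxx mulr1 expr0 mul1r addr0.
have -> : row' ord0 (col' ord0 M) = D by apply/matrixP=> i j; rewrite !mxE Mrr.
have -> : row' ord0 (col' ord0 N) = row' ord0 (col' ord0 D).
  apply/matrixP=> i j; rewrite !mxE -Mrr; congr (M _ _); apply: val_inj => /=.
  by rewrite /bump /=; lia.
ring.
Qed.

End BorderedDeterminant.

Lemma eigenvalue_det (F : fieldType) n (A : 'M[F]_n) x :
  eigenvalue A x <-> \det (x%:M - A) = 0.
Proof.
split=> [/eigenvalueP[v Av_xv v_nz] | /eqP/det0P[v v_nz Av_xv]].
  by apply/eqP/det0P; exists v; rewrite // mulmxBr Av_xv mul_mx_scalar subrr.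
by apply/eigenvalueP; exists v => //; apply/eqP;
  rewrite -mul_mx_scalar eq_sym -subr_eq0 -mulmxBr Av_xv.
Qed.

(* [charC a b k x = \det (x - C_k)] for the paper's k x k matrix C_k = [Cmat a b k.-1]. *)
Fixpoint charC (R : realType) (a b : nat -> R) (k : nat) (x : R) : R :=
  match k with
  | 0 => 1
  | k'.+1 => match k' with
             | 0 => x - a 1
             | k''.+1 => (x - a k) * charC a b k' x - b k * charC a b k'' x
             end
  end.

Section CharacteristicRecurrence.
Context {R : realType} {a b : nat -> R}.
Local Notation charC := (charC a b).

Lemma charCSS k x : charC k.+2 x = (x - a k.+2) * charC k.+1 x - b k.+2 * charC k x.
Proof. by []. Qed.

Lemma sub_CmatS k x : x%:M - Cmat a b k.+1 =
  block_mx ((x - a k.+2)%:M : 'M_1) ((- b k.+2) *: e1r R k) ((-1) *: e1c R k)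
           (x%:M - Cmat a b k).
Proof.
rewrite (scalar_mx_block 1 k.+1) (opp_block_mx ((a k.+2)%:M : 'M_1)).
by rewrite (add_block_mx (x%:M : 'M_1)) !sub0r raddfB scaleN1r scaleNr.
Qed.

Lemma det_sub_Cmat k x : \det (x%:M - Cmat a b k) = charC k.+1 x.
Proof.
suff [] : \det (x%:M - Cmat a b k) = charC k.+1 x /\
          \det (row' ord0 (col' ord0 (x%:M - Cmat a b k))) = charC k x by [].
elim: k => [|k [IHk IHminor]].
  by rewrite det_mx11 det_mx00 !mxE eqxx mulr1n.
rewrite sub_CmatS minor00_block1_mx det_block1_e1 IHk IHminor.
by split=> //; rewrite charCSS; ring.
Qed.

Lemma eigenvalue_Cmat k x : eigenvalue (Cmat a b k) x <-> charC k.+1 x = 0.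
Proof. by rewrite eigenvalue_det det_sub_Cmat. Qed.

End CharacteristicRecurrence.

Lemma distinct5P (R : realType) (x1 x2 x3 x4 x5 : R) : distinct5 x1 x2 x3 x4 x5 ->
  [/\ x1 != x2, x1 != x3, x1 != x4, x1 != x5 &
  [/\ x2 != x3, x2 != x4, x2 != x5, x3 != x4 & [/\ x3 != x5 & x4 != x5]]].
Proof.
rewrite /distinct5 /= !inE !negb_or.
by case/andP => /and4P[-> -> -> ->] /andP[/and3P[-> -> ->] /andP[/andP[-> ->] /andP[-> _]]].
Qed.

Section PeriodicSequences.
Context {R : realType} {al1 al2 be2 be3 be4 : R}.

Local Notation al := (alphaSeq al1 al2).
Local Notation be := (betaSeq be2 be3 be4).
Local Notation Lam := [:: al1; al2; be2; be3; be4].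

Lemma alphaSS i : al i.+2 = al i.
Proof. by rewrite /alphaSeq /= negbK. Qed.

Lemma betaS3 i : be i.+3 = be i.
Proof. by rewrite /betaSeq -addn3 modnDr. Qed.

Lemma mul_sub_alphaS i x : (x - al i) * (x - al i.+1) = (x - al1) * (x - al2).
Proof. by rewrite /alphaSeq /=; case: ifP => _ //; rewrite mulrC. Qed.

Lemma alpha_in_Lam i : al i \in Lam.
Proof. by rewrite /alphaSeq; case: ifP; rewrite !inE eqxx ?orbT. Qed.

Lemma beta_in_Lam i : be i \in Lam.
Proof. by rewrite /betaSeq; case: (i %% 3)%N => [|[|[|?]]]; rewrite !inE eqxx ?orbT. Qed.

Lemma mod3_cases i : [\/ [/\ i %% 3 = 0, i.+1 %% 3 = 1 & i.+2 %% 3 = 2],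
   [/\ i %% 3 = 1, i.+1 %% 3 = 2 & i.+2 %% 3 = 0] |
   [/\ i %% 3 = 2, i.+1 %% 3 = 0 & i.+2 %% 3 = 1]]%N.
Proof.
rewrite -(addn2 i) -(addn1 i) -(modnDml i 1) -(modnDml i 2).
by case: (i %% 3)%N (ltn_pmod i (isT : 0 < 3)%N) => [|[|[|]]] //= _;
  [constructor 1 | constructor 2 | constructor 3].
Qed.

Lemma Lam_sub_window i : {subset Lam <= [:: al i; be i; al i.+1; be i.+1; be i.+2]}.
Proof.
move=> x; rewrite !inE /alphaSeq /betaSeq /=.
by case: (odd i); case: (mod3_cases i) => -[-> -> ->] /=;
  move=> /or4P[/eqP->|/eqP->|/eqP->|/orP[]/eqP->];
  rewrite eqxx ?orTb ?orbT.
Qed.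

End PeriodicSequences.

Section RootPattern.
Variables (R : realType) (a b : nat -> R) (al1 al2 be2 be3 be4 : R).
Hypothesis Lam_uniq : distinct5 al1 al2 be2 be3 be4.
Hypothesis sum_neq : al2 + be2 != be3 + be4.

Local Notation al := (alphaSeq al1 al2).
Local Notation be := (betaSeq be2 be3 be4).
Local Notation Lam := [:: al1; al2; be2; be3; be4].
Local Notation chi := (charC a b).

Let al1_neq_al2 : al1 != al2. Proof. by case: (distinct5P Lam_uniq). Qed.
Let al1_neq_be2 : al1 != be2. Proof. by case: (distinct5P Lam_uniq). Qed.
Let al1_neq_be3 : al1 != be3. Proof. by case: (distinct5P Lam_uniq). Qed.
Let al1_neq_be4 : al1 != be4. Proof. by case: (distinct5P Lam_uniq). Qed.
Let al2_neq_be2 : al2 != be2. Proof. by case: (distinct5P Lam_uniq) => _ _ _ _ []. Qed.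
Let al2_neq_be3 : al2 != be3. Proof. by case: (distinct5P Lam_uniq) => _ _ _ _ []. Qed.
Let al2_neq_be4 : al2 != be4. Proof. by case: (distinct5P Lam_uniq) => _ _ _ _ []. Qed.
Let be2_neq_be3 : be2 != be3. Proof. by case: (distinct5P Lam_uniq) => _ _ _ _ []. Qed.
Let be2_neq_be4 : be2 != be4.
Proof. by case: (distinct5P Lam_uniq) => _ _ _ _ [_ _ _ _ []]. Qed.
Let be3_neq_be4 : be3 != be4.
Proof. by case: (distinct5P Lam_uniq) => _ _ _ _ [_ _ _ _ []]. Qed.

Ltac neq0 := repeat (first [apply: mulf_neq0 | rewrite oppr_eq0]);
  first [assumption | rewrite subr_eq0; first [assumption | rewrite eq_sym; assumption]].

Lemma alpha_neq_beta i j : al i != be j.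
Proof.
rewrite /alphaSeq /betaSeq.
by case: (odd i); case: (j %% 3)%N => [|[|[|?]]] //; rewrite eq_sym.
Qed.

Lemma mul_sub_beta_neq0 i : (be i - al1) * (be i - al2) != 0.
Proof.
by apply: mulf_neq0; rewrite subr_eq0 eq_sym;
  [apply: (alpha_neq_beta 1) | apply: (alpha_neq_beta 0)].
Qed.

Definition params_at (i : nat) : Prop :=
  match i with
  | 0 => True
  | 1 => a 1 = al1
  | 2 => a 2 = - al1 + al2 + be2 /\ b 2 = (be2 - al1) * (al1 - al2)
  | 3 => a 3 = al1 /\ b 3 = (be3 - al2) * (be3 - be2)
  | 4 => a 4 = al2 /\
         b 4 = (be4 - al1) * (be3 - be4) * (al2 + be2 - be3 - be4) / (be4 - be2)
  | _ => a i = al i /\ b i = (be i - al1) * (be i - al2)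
  end.

Definition params_upto (n : nat) : Prop := forall i, (0 < i <= n)%N -> params_at i.

(* Since [Lam] is the window [al i, be i, al i.+1, be i.+1, be i.+2], this says that
   [al i] and [be i] are exactly the roots of [chi i] in [Lam]. *)
Definition root_pattern (i : nat) : Prop :=
  [/\ chi i (al i) = 0, chi i (be i) = 0, chi i (al i.+1) != 0, chi i (be i.+1) != 0
    & chi i (be i.+2) != 0].

Lemma params_upto_le m n : (m <= n)%N -> params_upto n -> params_upto m.
Proof. by move=> mn hp i /andP[i0 im]; apply: hp; rewrite i0 (leq_trans im). Qed.

Lemma params_uptoS n : params_upto n -> params_at n.+1 -> params_upto n.+1.
Proof.
move=> hp hn i /andP[i0]; rewrite leq_eqVlt ltnS => /orP[/eqP-> // | i_le_n].
by apply: hp; rewrite i0.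
Qed.

Lemma params_at_alpha i : (2 < i)%N -> params_at i -> a i = al i.
Proof. by case: i => [|[|[|[|[|i]]]]] // _ []. Qed.

Lemma root_patternP i x : root_pattern i -> x \in Lam ->
  (chi i x = 0 <-> x = al i \/ x = be i).
Proof.
case=> r_al r_be n_alS n_beS n_beSS /(Lam_sub_window i) x_win; split; last by case=> ->.
move: x_win; rewrite !inE => /or4P[/eqP->|/eqP->|/eqP->|/orP[]/eqP->] hx;
  try by [left | right].
all: by move/eqP: hx; rewrite ?(negbTE n_alS) ?(negbTE n_beS) ?(negbTE n_beSS).
Qed.

Let sum_sub_neq0 : al2 + be2 - be3 - be4 != 0.
Proof. by rewrite -addrA -opprD subr_eq0. Qed.

Lemma charC2E : params_at 1 -> params_at 2 -> forall x, chi 2 x = (x - al2) * (x - be2).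
Proof.
move=> a1 [a2 b2] x.
by rewrite charCSS [chi 1 x]/= [chi 0 x]/= (a1 : a 1 = al1) a2 b2; ring.
Qed.

Lemma charC3E : params_at 1 -> params_at 2 -> params_at 3 ->
  forall x, chi 3 x = (x - al1) * ((x - al2) * (x - be2) - (be3 - al2) * (be3 - be2)).
Proof.
move=> a1 p2 [a3 b3] x.
by rewrite charCSS charC2E // [chi 1 x]/= (a1 : a 1 = al1) a3 b3; ring.
Qed.

Lemma root_pattern2 : params_at 1 -> params_at 2 -> root_pattern 2.
Proof.
move=> p1 p2; rewrite /root_pattern !charC2E // /alphaSeq /betaSeq /= !subrr.
by rewrite mul0r mulr0; split=> //; neq0.
Qed.

Lemma root_pattern3 : params_at 1 -> params_at 2 -> params_at 3 -> root_pattern 3.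
Proof.
move=> p1 p2 p3; rewrite /root_pattern !charC3E // /alphaSeq /betaSeq /= !subrr.
rewrite ?mul0r ?mulr0 ?sub0r ?mulrN.
split=> //; try neq0.
rewrite (_ : (be4 - al2) * (be4 - be2) - (be3 - al2) * (be3 - be2) =
             (be4 - be3) * ((be3 + be4) - (al2 + be2))); last by ring.
neq0.
Qed.

Lemma root_pattern4 : params_at 1 -> params_at 2 -> params_at 3 -> params_at 4 ->
  root_pattern 4.
Proof.
move=> p1 p2 p3 [a4 b4].
have b4_neq0 : b 4 != 0 by rewrite b4; apply: mulf_neq0; rewrite ?invr_eq0; neq0.
rewrite /root_pattern !(charCSS 2) !charC3E // !charC2E // a4 /alphaSeq /betaSeq /=.
split.
- by rewrite !subrr !mul0r mulr0 subr0.
- by rewrite b4; field; neq0.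
- rewrite (_ : _ - _ = - (b 4 * ((al1 - al2) * (al1 - be2)))); last by ring.
  by rewrite oppr_eq0; apply: mulf_neq0 => //; neq0.
- rewrite (_ : _ - _ = (be2 - al2) * (be2 - al1) * (- ((be3 - al2) * (be3 - be2))));
    last by ring.
  neq0.
- rewrite (_ : _ - _ = - (b 4 * ((be3 - al2) * (be3 - be2)))); last by ring.
  by rewrite oppr_eq0; apply: mulf_neq0 => //; neq0.
Qed.

Lemma params_at2_of_roots : params_at 1 -> chi 2 al2 = 0 -> chi 2 be2 = 0 -> params_at 2.
Proof.
move=> a1; rewrite !charCSS [chi 1 _]/= [chi 1 be2]/= [chi 0 _]/= [chi 0 be2]/=.
rewrite (a1 : a 1 = al1) => r_al r_be.
have /eqP : (al2 - be2) * (al2 + be2 - al1 - a 2) = 0.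
  rewrite -[RHS](subrr 0) -{1}r_al -r_be; ring.
rewrite mulf_eq0 subr_eq0 (negbTE al2_neq_be2) => /eqP a2_eq.
have a2 : a 2 = - al1 + al2 + be2 by lra.
split=> //; move/eqP: r_al; rewrite mulr1 subr_eq0 => /eqP <-; rewrite a2; ring.
Qed.

Lemma params_at3_of_roots : params_at 1 -> params_at 2 ->
  chi 3 al1 = 0 -> chi 3 be3 = 0 -> params_at 3.
Proof.
move=> a1 p2; rewrite !(charCSS 1) !charC2E // [chi 1 _]/= [chi 1 be3]/= (a1 : a 1 = al1).
rewrite subrr mulr0 subr0 => /eqP; rewrite !mulf_eq0 !subr_eq0.
rewrite (negbTE al1_neq_al2) (negbTE al1_neq_be2) !orbF eq_sym => /eqP a3 r_be.
split=> //; apply/eqP; rewrite eq_sym -subr_eq0; apply/eqP.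
apply: (mulfI (_ : be3 - al1 != 0)); first by neq0.
by rewrite mulr0 -r_be a3; ring.
Qed.

Lemma params_at4_of_roots : params_at 1 -> params_at 2 -> params_at 3 ->
  chi 4 al2 = 0 -> chi 4 be4 = 0 -> params_at 4.
Proof.
move=> p1 p2 p3 r_al r_be.
have /eqP : (al2 - a 4) * ((al2 - al1) * ((be3 - al2) * (be3 - be2))) = 0.
  by rewrite -oppr0 -r_al (charCSS 2) charC3E // charC2E //; ring.
have nz : (al2 - al1) * ((be3 - al2) * (be3 - be2)) != 0 by neq0.
rewrite mulf_eq0 (negbTE nz) orbF => /eqP a4_eq.
have a4 : a 4 = al2 by lra.
split=> //; apply: (mulIf (_ : be4 - be2 != 0)); first by neq0.
rewrite divfK; last by neq0.
apply/eqP; rewrite eq_sym -subr_eq0; apply/eqP.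
apply: (mulfI (_ : be4 - al2 != 0)); first by neq0.
by rewrite mulr0 -r_be (charCSS 2) charC3E // charC2E // a4; ring.
Qed.

Lemma root_pattern_step m : root_pattern m -> root_pattern m.+1 -> root_pattern m.+2 ->
  a m.+2 = al m.+2 -> a m.+3 = al m.+3 -> b m.+3 = (be m.+3 - al1) * (be m.+3 - al2) ->
  root_pattern m.+3.
Proof.
move=> [_ r0b _ _ _] [r1a r1b r1c r1d r1e] [r2a r2b r2c r2d r2e] a2 a3 b3.
have b3_neq0 : b m.+3 != 0 by rewrite b3; apply: mul_sub_beta_neq0.
rewrite ?alphaSS ?betaS3 in r1a r1b r1c r1d r1e r2a r2b r2c r2d r2e a2 a3 b3 b3_neq0 *.
split; rewrite (charCSS m.+1) ?alphaSS ?betaS3 a3.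
- by rewrite subrr mul0r r1a mulr0 subr0.
- by rewrite (charCSS m) a2 r0b mulr0 subr0 b3 -(mul_sub_alphaS m (be m)); ring.
- by rewrite r2a mulr0 sub0r oppr_eq0 mulf_neq0.
- rewrite r1b mulr0 subr0 mulf_neq0 // subr_eq0 eq_sym; exact: alpha_neq_beta.
- by rewrite r2b mulr0 sub0r oppr_eq0 mulf_neq0.
Qed.

Lemma params_step m : root_pattern m -> root_pattern m.+1 -> root_pattern m.+2 ->
  a m.+2 = al m.+2 -> chi m.+3 (al m.+3) = 0 -> chi m.+3 (be m.+3) = 0 ->
  a m.+3 = al m.+3 /\ b m.+3 = (be m.+3 - al1) * (be m.+3 - al2).
Proof.
move=> [_ r0b _ _ _] [r1a r1b r1c r1d r1e] [r2a r2b r2c r2d r2e] a2 r_al r_be.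
rewrite ?alphaSS ?betaS3 in r1a r1b r1c r1d r1e r2a r2b r2c r2d r2e a2 r_al r_be *.
move: r_al; rewrite (charCSS m.+1) r1a mulr0 subr0 => /eqP.
rewrite mulf_eq0 (negbTE r2c) orbF subr_eq0 => /eqP a3; split=> //.
rewrite (charCSS m.+1) (charCSS m) a2 r0b mulr0 subr0 -a3 in r_be.
have /eqP : ((be m - al1) * (be m - al2) - b m.+3) * chi m.+1 (be m) = 0.
  by rewrite -(mul_sub_alphaS m) -r_be; ring.
by rewrite mulf_eq0 (negbTE r1e) orbF subr_eq0 eq_sym => /eqP.
Qed.

Lemma root_pattern_of_params i : (2 <= i)%N -> params_upto i -> root_pattern i.
Proof.
elim/ltn_ind: i => -[|[|[|[|[|m]]]]] // IH _ hp.
- by apply: root_pattern2; apply: hp.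
- by apply: root_pattern3; apply: hp.
- by apply: root_pattern4; apply: hp.
have r j : (1 < j)%N -> (j <= m.+4)%N -> root_pattern j.
  by move=> j2 jm; apply: IH => //; apply: params_upto_le hp; apply: leqW.
have [a5 b5] : params_at m.+2.+3 by apply: hp; rewrite /= leqnn.
apply: root_pattern_step (r m.+2 isT (leqW (leqnSn _))) (r m.+3 isT (leqnSn _))
  (r m.+4 isT (leqnn _)) _ a5 b5.
by apply: params_at_alpha; last apply: hp; rewrite //= leqW.
Qed.

Lemma params_of_roots i : (0 < i)%N -> params_upto i ->
  chi i.+1 (al i.+1) = 0 -> chi i.+1 (be i.+1) = 0 -> params_at i.+1.
Proof.
case: i => [|[|[|[|m]]]] // _ hp r_al r_be.
- by apply: params_at2_of_roots => //; apply: hp.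
- by apply: params_at3_of_roots => //; apply: hp.
- by apply: params_at4_of_roots => //; apply: hp.
have r j : (1 < j)%N -> (j <= m.+4)%N -> root_pattern j.
  by move=> j2 jm; apply: root_pattern_of_params => //; apply: params_upto_le hp.
apply: params_step (r m.+2 isT (leqW (leqnSn _))) (r m.+3 isT (leqnSn _))
  (r m.+4 isT (leqnn _)) _ r_al r_be.
by apply: params_at_alpha; last apply: hp; rewrite //= leqnn.
Qed.

Definition param_cond (n : nat) : Prop :=
  (forall i : nat, (1 <= i <= n)%N -> odd i -> a i = al1) /\
  ((2 <= n)%N -> a 2%N = - al1 + al2 + be2) /\
  (forall i : nat, (2 < i <= n)%N -> ~~ odd i -> a i = al2) /\
  ((2 <= n)%N -> b 2%N = (be2 - al1) * (al1 - al2)) /\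
  ((3 <= n)%N -> b 3%N = (be3 - al2) * (be3 - be2)) /\
  ((4 <= n)%N -> b 4%N =
      (be4 - al1) * (be3 - be4) * (al2 + be2 - be3 - be4) / (be4 - be2)) /\
  (forall i : nat, (4 < i <= n)%N -> b i = (be i - al1) * (be i - al2)).

Definition spectral_cond (n : nat) : Prop :=
  (forall x : R, eigenvalue (Cmat a b 0) x <-> x = al1) /\
  (forall i : nat, (2 <= i <= n)%N -> forall x : R, x \in Lam ->
     (eigenvalue (Cmat a b i.-1) x <-> x = al i \/ x = be i)).

Lemma param_condP n : param_cond n <-> params_upto n.
Proof.
split=> [[a_odd [a2 [a_even [b2 [b3 [b4 b_gt4]]]]]] | hp].
  move=> i /andP[i_gt0 i_le_n]; have i_ge1 : (1 <= i <= n)%N by rewrite i_gt0.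
  case: i i_gt0 i_le_n i_ge1 => [|[|[|[|[|i]]]]] // _ i_le_n i_ge1.
  - exact: a_odd.
  - by split; [apply: a2 | apply: b2].
  - by split; [apply: a_odd | apply: b3].
  - by split; [apply: a_even | apply: b4].
  split; last exact: b_gt4.
  by rewrite /alphaSeq; case: ifP => odd_i; [apply: a_odd | apply: a_even; rewrite ?odd_i].
have p i : (i <= n)%N -> (0 < i)%N -> params_at i by move=> i_le_n i0; apply/hp/andP.
split; [|split; [|split; [|split; [|split; [|split]]]]].
- move=> -[|[|[|[|[|i]]]]] // /andP[_] /p /(_ isT); rewrite /alphaSeq //=.
  + by case.
  + by case=> -> _ odd_i; rewrite /alphaSeq /= odd_i.
- by move=> n2; case: (p 2%N n2 isT).
- move=> -[|[|[|[|[|i]]]]] // /andP[_ i_le_n] even_i; case: (p _ i_le_n isT) => //.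
  by rewrite /alphaSeq (negbTE even_i).
- by move=> n2; case: (p 2%N n2 isT).
- by move=> n3; case: (p 3%N n3 isT).
- by move=> n4; case: (p 4%N n4 isT).
- by move=> -[|[|[|[|[|i]]]]] // /andP[_ i_le_n]; case: (p _ i_le_n isT).
Qed.

Lemma spectral_condP n : (0 < n)%N -> spectral_cond n <-> params_upto n.
Proof.
move=> n_gt0; split=> [[C0_spec Ci_spec] | hp].
  suff : forall i, (i <= n)%N -> params_upto i by apply.
  elim=> [_ [|j] // | i IH i_lt_n]; apply: params_uptoS (IH (ltnW i_lt_n)) _.
  case: i IH i_lt_n => [|i] IH i_lt_n.
    by apply/C0_spec/eigenvalue_Cmat; apply: subrr.
  have hp := IH (ltnW i_lt_n).
  have Ci_root x : x \in Lam -> x = al i.+2 \/ x = be i.+2 -> chi i.+2 x = 0.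
    by move=> x_in x_root; apply/eigenvalue_Cmat/(Ci_spec i.+2 i_lt_n).
  by apply: params_of_roots hp _ _ => //; apply: Ci_root;
    by [apply: alpha_in_Lam | apply: beta_in_Lam | left | right].
split=> [x | i /andP[i_gt1 i_le_n] x x_in].
  have a1 : a 1 = al1 := hp 1%N n_gt0.
  rewrite eigenvalue_Cmat /= a1.
  by split=> [/eqP | ->]; [rewrite subr_eq0 => /eqP | exact: subrr].
rewrite eigenvalue_Cmat prednK ?(ltnW i_gt1) //.
by apply: root_patternP x_in; apply: root_pattern_of_params (params_upto_le i_le_n hp).
Qed.

End RootPattern.

Section SignConditions.
Variable R : realType.

Lemma mul_gt0_cases (x y : R) : 0 < x * y -> (0 < x /\ 0 < y) \/ (x < 0 /\ y < 0).
Proof.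
case: (ltgtP x 0) => [x_lt0 | x_gt0 | ->]; last by rewrite mul0r ltxx.
- by rewrite nmulr_rgt0 // => y_lt0; right.
- by rewrite pmulr_rgt0 // => y_gt0; left.
Qed.

Lemma mul_lt0_cases (x y : R) : x * y < 0 -> (0 < x /\ y < 0) \/ (x < 0 /\ 0 < y).
Proof.
move=> xy_lt0; have /mul_gt0_cases : 0 < - x * y by rewrite mulNr oppr_gt0.
by rewrite oppr_gt0 oppr_lt0 => -[[] | []]; [right | left].
Qed.

Ltac split_lt x y := let H := fresh "x_vs_y" in
  have H : x < y \/ y < x by
    (apply/orP; apply: lt_total; first [assumption | rewrite eq_sym; assumption]);
  case: H => H.

Ltac pick_case :=
  first [ left; repeat split; solve [assumption | lra] | right; pick_case
        | repeat split; solve [assumption | lra] ].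

Ltac distinct5_lra := rewrite /distinct5 /= !inE !negb_or /=;
  repeat (apply/andP; split); try done; apply/eqP => E; lra.

Lemma inB_of_gt0 (a1 a2 b2 b3 b4 : R) : distinct5 a1 a2 b2 b3 b4 ->
  0 < (b2 - a1) * (a1 - a2) -> 0 < (b3 - a2) * (b3 - b2) ->
  0 < (b4 - a1) * (b3 - b4) * (a2 + b2 - b3 - b4) / (b4 - b2) ->
  inB a1 a2 b2 b3 b4.
Proof.
move=> Hd h2 h3 h4; split => //.
have [h12 h13 h14 h15 [h23 h24 h25 h34 [h35 h45]]] := distinct5P Hd.
case/mul_gt0_cases: h2 => [[u1 u2]|[u1 u2]]; case/mul_gt0_cases: h3 => [[v1 v2]|[v1 v2]];
case/mul_gt0_cases: h4 => [[w1 w2]|[w1 w2]]; rewrite ?invr_gt0 ?invr_lt0 in w2.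
all: first [ case/mul_gt0_cases: w1 => [[x1 x2]|[x1 x2]]
           | case/mul_lt0_cases: w1 => [[x1 x2]|[x1 x2]] ].
all: first [ case/mul_gt0_cases: x1 => [[y1 y2]|[y1 y2]]
           | case/mul_lt0_cases: x1 => [[y1 y2]|[y1 y2]] ].
all: split_lt b4 a2.
all: try (exfalso; lra).
all: pick_case.
Qed.

Lemma inB3_of_gt0 (a1 a2 b2 b3 : R) :
  0 < (b2 - a1) * (a1 - a2) -> 0 < (b3 - a2) * (b3 - b2) -> inB3 a1 a2 b2 b3.
Proof.
case/mul_gt0_cases => [[u1 u2]|[u1 u2]]; case/mul_gt0_cases => [[v1 v2]|[v1 v2]].
- by exists (b3 + 1); split; [distinct5_lra | pick_case].
- by exists ((a1 + b2) / 2); split; [distinct5_lra | pick_case].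
- by exists (b3 + 1); split; [distinct5_lra | pick_case].
- by exists ((b2 + a1) / 2); split; [distinct5_lra | pick_case].
Qed.

Lemma inB2_of_gt0 (a1 a2 b2 : R) : 0 < (b2 - a1) * (a1 - a2) -> inB2 a1 a2 b2.
Proof.
case/mul_gt0_cases => [[u1 u2]|[u1 u2]].
- by exists (b2 + 1), (b2 + 2); split; [distinct5_lra | pick_case].
- by exists (a2 + 1), (a2 + 2); split; [distinct5_lra | pick_case].
Qed.

End SignConditions.

Theorem mainTheorem5 (R : realType) (al1 al2 be2 be3 be4 : R)
  (n : nat) (a b : nat -> R) :
  distinct5 al1 al2 be2 be3 be4 ->
  al2 + be2 != be3 + be4 ->
  (1 <= n)%N ->
  (forall i : nat, (2 <= i <= n)%N -> 0 < b i) ->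
  let alpha := alphaSeq al1 al2 in
  let beta := betaSeq be2 be3 be4 in
  let Lam := [:: al1; al2; be2; be3; be4] in
  let condI :=
    (forall x : R, eigenvalue (Cmat a b 0) x <-> x = al1) /\
    (forall i : nat, (2 <= i <= n)%N -> forall x : R, x \in Lam ->
       (eigenvalue (Cmat a b i.-1) x <-> x = alpha i \/ x = beta i)) in
  let condII :=
    (forall i : nat, (1 <= i <= n)%N -> odd i -> a i = al1) /\
    ((2 <= n)%N -> a 2%N = - al1 + al2 + be2) /\
    (forall i : nat, (2 < i <= n)%N -> ~~ odd i -> a i = al2) /\
    ((2 <= n)%N -> b 2%N = (be2 - al1) * (al1 - al2)) /\
    ((3 <= n)%N -> b 3%N = (be3 - al2) * (be3 - be2)) /\
    ((4 <= n)%N -> b 4%N =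
        (be4 - al1) * (be3 - be4) * (al2 + be2 - be3 - be4) / (be4 - be2)) /\
    (forall i : nat, (4 < i <= n)%N ->
        b i = (beta i - al1) * (beta i - al2)) in
  (condI <-> condII) /\
  (condII ->
     ((4 <= n)%N -> inB al1 al2 be2 be3 be4) /\
     (n = 3%N -> inB3 al1 al2 be2 be3) /\
     (n = 2%N -> inB2 al1 al2 be2)).
Proof.
move=> Lam_uniq sum_neq n_gt0 b_gt0 alpha beta Lam condI condII.
have spectral_iff : condI <-> params_upto a b al1 al2 be2 be3 be4 n :=
  spectral_condP a b Lam_uniq sum_neq n_gt0.
have param_iff : condII <-> params_upto a b al1 al2 be2 be3 be4 n :=
  param_condP a b al1 al2 be2 be3 be4 n.
split; first exact: iff_trans spectral_iff (iff_sym param_iff).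
case=> _ [_ [_ [b2 [b3 [b4 _]]]]].
have b2_gt0 : (2 <= n)%N -> 0 < (be2 - al1) * (al1 - al2).
  by move=> n2; rewrite -b2 //; apply: b_gt0; rewrite n2.
have b3_gt0 : (3 <= n)%N -> 0 < (be3 - al2) * (be3 - be2).
  by move=> n3; rewrite -b3 //; apply: b_gt0; rewrite n3.
have b4_gt0 : (4 <= n)%N ->
    0 < (be4 - al1) * (be3 - be4) * (al2 + be2 - be3 - be4) / (be4 - be2).
  by move=> n4; rewrite -b4 //; apply: b_gt0; rewrite n4.
split=> [n4 | ].
  exact: inB_of_gt0 Lam_uniq (b2_gt0 (ltnW (ltnW n4))) (b3_gt0 (ltnW n4)) (b4_gt0 n4).
split=> n_eq; subst n.
- exact: inB3_of_gt0 (b2_gt0 isT) (b3_gt0 isT).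
- exact: inB2_of_gt0 (b2_gt0 isT).
Qed.
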